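(* Let $\sigma\colon\Sigma\to\Sigma$ be a topologically mixing two-sided subshift of finite type with a Gibbs measure $\mu$, $f\colon\Sigma\to\mathbb R$ Lipschitz with $\int f\,d\mu=0$, $F(x,r)=(\sigma x,r+f(x))$ and $\nu=\mu\times\mathrm{Leb}$. If $\Phi\in L^\infty(\nu)$ is a global observable, then $\Phi\circ F$ is a global observable and $\nu_{\mathrm{av}}(\Phi\circ F)=\nu_{\mathrm{av}}(\Phi)$.
   Context: A global observable is a $\Phi\in L^\infty(\nu)$ for which the limit $\nu_{\mathrm{av}}(\Phi)=\lim_{R\to\infty}\frac1{2R}\int_{\Sigma\times[-R,R]}\Phi\,d\nu$ exists. Lipschitz is w.r.t. $d_\theta(x,y)=\theta^{\max\{j:\ x_i=y_i\ \forall|i|<j\}}$ for some $0<\theta<1$. *)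

From HB Require Import structures.
From mathcomp Require Import all_boot all_order all_algebra.
From mathcomp Require Import all_classical all_reals all_analysis.
Set Implicit Arguments. Unset Strict Implicit. Unset Printing Implicit Defensive.
Import Order.TTheory GRing.Theory Num.Theory.
Import numFieldNormedType.Exports.
Local Open Scope classical_set_scope.
Local Open Scope ring_scope.

(* The alphabet is 'I_n.+1 = {0,...,n}; we make it a pointed type so that the
   sequence space can carry a measurable structure. *)
HB.instance Definition _ (n : nat) := isPointed.Build 'I_n.+1 ord0.

Definition cylinders (n : nat) : set (set (int -> 'I_n.+1)) :=
  [set C | exists (m : int) (l : nat) (w : nat -> 'I_n.+1),
     C = [set x | forall j : nat, (j < l)%N -> x (m + j%:Z) = w j]].

Arguments cylinders n : clear implicits.

(* Full two-sided shift space with the Borel (= cylinder-generated) sigma-algebra. *)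
Notation Shift n := (g_sigma_algebraType (cylinders n)).

Definition shift (n : nat) (x : Shift n) : Shift n := fun i => x (i + 1).

Definition SigmaA (n : nat) (A : 'I_n.+1 -> 'I_n.+1 -> bool) : set (Shift n) :=
  [set x | forall i : int, A (x i) (x (i + 1))].

(* x and y agree on all coordinates |i| < j, i.e. d_theta(x,y) <= theta^j. *)
Definition agree (n : nat) (x y : Shift n) (j : nat) : Prop :=
  forall i : int, (absz i < j)%N -> x i = y i.

(* g is Lipschitz on Sigma_A w.r.t. d_theta for some 0 < theta < 1, where
   d_theta(x,y) = theta^(max{j : x_i = y_i for all |i| < j}). *)
Definition lipschitzA (R : realType) (n : nat) (A : 'I_n.+1 -> 'I_n.+1 -> bool)
    (g : Shift n -> R) : Prop :=
  exists theta L : R, 0 < theta < 1 /\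
    forall x y, SigmaA A x -> SigmaA A y ->
      forall j : nat, agree x y j -> `|g x - g y| <= L * theta ^+ j.

(* Open subsets of Sigma_A for the metric d_theta (the topology does not depend
   on theta): every point has a d_theta-ball (a cylinder) around it in U. *)
Definition openA (n : nat) (A : 'I_n.+1 -> 'I_n.+1 -> bool) (U : set (Shift n)) : Prop :=
  U `<=` SigmaA A /\
  forall x, U x -> exists j : nat, forall y, SigmaA A y -> agree x y j -> U y.

Definition topologically_mixing (n : nat) (A : 'I_n.+1 -> 'I_n.+1 -> bool) : Prop :=
  forall U V : set (Shift n), openA A U -> openA A V -> U !=set0 -> V !=set0 ->
    exists N : nat, forall k : nat, (N <= k)%N -> ((iter k (@shift n)) @` U `&` V) !=set0.

Definition cyl0 (n : nat) (x : Shift n) (m : nat) : set (Shift n) :=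
  [set y | forall j : nat, (j < m)%N -> y j%:Z = x j%:Z].

Definition birkhoff (R : realType) (n : nat) (phi : Shift n -> R) (m : nat) (x : Shift n) : R :=
  \sum_(j < m) phi (iter j (@shift n) x).

Definition Gibbs (R : realType) (n : nat) (A : 'I_n.+1 -> 'I_n.+1 -> bool)
    (mu : probability (Shift n) R) : Prop :=
  mu (SigmaA A) = 1%E /\
  (forall B : set (Shift n), measurable B -> mu ((@shift n) @^-1` B) = mu B) /\
  exists phi : Shift n -> R, lipschitzA A phi /\
  exists P C : R, 0 < C /\
    forall x, SigmaA A x -> forall m : nat, (0 < m)%N ->
      ((C^-1 * expR (- (m%:R * P) + birkhoff phi m x))%:E <= mu (cyl0 x m))%E /\
      (mu (cyl0 x m) <= (C * expR (- (m%:R * P) + birkhoff phi m x))%:E)%E.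

Definition nu (R : realType) (n : nat) (mu : probability (Shift n) R) :=
  (mu \x (@lebesgue_measure R))%E.

Definition skew_map (R : realType) (n : nat) (f : Shift n -> R) (z : Shift n * R) : Shift n * R :=
  (shift z.1, z.2 + f z.1).

Definition Linfty (R : realType) (n : nat) (A : 'I_n.+1 -> 'I_n.+1 -> bool)
    (mu : probability (Shift n) R) (Phi : Shift n * R -> R) : Prop :=
  measurable_fun (SigmaA A `*` setT) Phi /\
  exists M : R, {ae nu mu, forall z, `|Phi z| <= M}.

Definition window_avg (R : realType) (n : nat) (A : 'I_n.+1 -> 'I_n.+1 -> bool)
    (mu : probability (Shift n) R) (Phi : Shift n * R -> R) (r : R) : R :=
  (2 * r)^-1 * fine (\int[nu mu]_(z in SigmaA A `*` `[(- r)%R, r]) (Phi z)%:E)%E.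

Definition global_observable (R : realType) (n : nat) (A : 'I_n.+1 -> 'I_n.+1 -> bool)
    (mu : probability (Shift n) R) (Phi : Shift n * R -> R) : Prop :=
  Linfty A mu Phi /\ exists l : R, window_avg A mu Phi r @[r --> +oo] --> l.

Definition nu_av (R : realType) (n : nat) (A : 'I_n.+1 -> 'I_n.+1 -> bool)
    (mu : probability (Shift n) R) (Phi : Shift n * R -> R) : R :=
  lim (window_avg A mu Phi r @[r --> +oo]).

From Pilot Require Import Defs.
From HB Require Import structures.
From mathcomp Require Import all_boot all_order all_algebra.
From mathcomp Require Import all_classical all_reals all_analysis.
From mathcomp Require Import measurable_realfun.
From mathcomp Require Import zify lra.
Import Order.TTheory GRing.Theory Num.Theory.
Import numFieldNormedType.Exports.
Local Open Scope classical_set_scope.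
Local Open Scope ring_scope.

(* The skew map F(x, r) = (sigma x, r + f x) preserves nu = mu x Leb: by
   Fubini, the x-section of F^-1 E is a translate of the (sigma x)-section of
   E, translations preserve Lebesgue measure and sigma preserves mu.  Hence
   int_{Sigma x [-R, R]} Phi dnu = int_{F^-1 (Sigma x [-R, R])} Phi o F dnu.
   Since f is bounded by some B on Sigma, the windows F^-1 (Sigma x [-R, R])
   and Sigma x [-R, R] differ only inside Sigma x ([-R-B, -R+B] u [R-B, R+B]),
   a set of nu-measure at most 4B.  So the window integrals of Phi o F and of
   Phi differ by at most 8B ||Phi||_oo, which disappears after dividing by 2R. *)

Section shift_space.
Context {n : nat}.
Implicit Types (x y : Shift n) (m : int) (l : nat).

Definition window m l x : seq 'I_n.+1 := [seq x (m + j%:Z) | j <- iota 0 l].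

Lemma nth_window m l x j : (j < l)%N -> nth ord0 (window m l x) j = x (m + j%:Z).
Proof. by move=> jl; rewrite (nth_map 0%N) ?size_iota // nth_iota. Qed.

Definition extend_word m (t : seq 'I_n.+1) : Shift n :=
  fun i => if m <= i then nth ord0 t `|i - m|%N else ord0.

Lemma extend_wordE m t (j : nat) : extend_word m t (m + j%:Z) = nth ord0 t j.
Proof. by rewrite /extend_word lerDl addrC addKr. Qed.

Lemma cylinder_measurable m l (w : nat -> 'I_n.+1) :
  measurable [set x : Shift n | forall j, (j < l)%N -> x (m + j%:Z) = w j].
Proof. apply: sub_sigma_algebra; by exists m, l, w. Qed.

(* [S] is the union, over the words [t] whose extension lies in [S], of the
   cylinders spelled by [t] on the window. *)
Lemma window_measurable m l (S : set (Shift n)) :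
  (forall x y, (forall j, (j < l)%N -> x (m + j%:Z) = y (m + j%:Z)) -> S x -> S y) ->
  measurable S.
Proof.
move=> S_window.
pose C t := [set x : Shift n | S (extend_word m t) /\
  forall j, (j < l)%N -> x (m + j%:Z) = nth ord0 t j].
have -> : S = \bigcup_t C t.
  apply/seteqP; split => [x Sx|x [t _ [St xt]]].
    exists (window m l x) => //; split => [|j jl]; last by rewrite nth_window.
    by apply: S_window Sx => j jl; rewrite extend_wordE nth_window.
  by apply: S_window St => j jl; rewrite extend_wordE xt.
apply: countable_bigcupT_measurable; first exact: countableP.
move=> t; have [St|nSt] := pselect (S (extend_word m t)).
  rewrite (_ : C t = [set x | forall j, (j < l)%N -> x (m + j%:Z) = nth ord0 t j]).
    exact: cylinder_measurable.
  by apply/seteqP; split => [x []|x] //.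
by rewrite (_ : C t = set0) // -subset0 => x [].
Qed.

Lemma SigmaA_measurable (A : 'I_n.+1 -> 'I_n.+1 -> bool) : measurable (SigmaA A).
Proof.
rewrite -[SigmaA A]setCK; apply: measurableC.
have -> : ~` SigmaA A = \bigcup_i ~` [set x : Shift n | A (x i) (x (i + 1))].
  apply/seteqP; split => [x /existsNP[i Ai]|x [i _ Ai] SAx]; first by exists i.
  exact: Ai (SAx i).
apply: countable_bigcupT_measurable; first exact: countableP.
move=> i; apply: measurableC; apply: (window_measurable i 2) => x y xy /=.
by have := xy 0%N isT; have := xy 1%N isT; rewrite addr0 => -> ->.
Qed.

Lemma shift_measurable : measurable_fun setT (@Defs.shift n).
Proof.
apply: (@measurability _ _ (Shift n) (Shift n) _ _ (cylinders n) erefl).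
move=> _ [_ [m [l [w ->]]] <-].
apply: (window_measurable (m + 1) l) => x y xy [_ /= xw]; split => // j jl.
by rewrite /Defs.shift addrAC -xy // -(xw j jl) /Defs.shift addrAC.
Qed.

Lemma SigmaA_shift (A : 'I_n.+1 -> 'I_n.+1 -> bool) x :
  SigmaA A (Defs.shift x) <-> SigmaA A x.
Proof.
split => SAx i; last exact: SAx.
by have := SAx (i - 1); rewrite /Defs.shift subrK.
Qed.

Lemma agree_window x y j :
  (forall k, (k < 2 * j)%N -> x (- j%:Z + k%:Z) = y (- j%:Z + k%:Z)) -> agree x y j.
Proof.
move=> xy i ij; have -> : i = - j%:Z + (absz (i + j%:Z))%:Z by lia.
by apply: xy; lia.
Qed.

End shift_space.

Lemma geometric_lt {R : realType} (L : R) {t e : R} :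
  0 < t < 1 -> 0 < e -> exists j : nat, L * t ^+ j < e.
Proof.
move=> /andP[t0 t1] e0.
have : L * t ^+ j @[j --> \oo] --> 0.
  rewrite -(mulr0 L); apply: cvgM; first exact: cvg_cst.
  by apply: cvg_expr; rewrite ger0_norm ?ltW.
move=> /cvgr_lt /(_ e e0) [N _ LtN].
by exists N; apply: (LtN N (leqnn N)).
Qed.

Section lipschitzA.
Context {R : realType} {n : nat} {A : 'I_n.+1 -> 'I_n.+1 -> bool} {g : Shift n -> R}.
Hypothesis g_lip : lipschitzA A g.

Lemma lipschitzA_measurable : measurable_fun (SigmaA A) g.
Proof.
have [th [L [th01 gL]]] := g_lip.
apply: (measurability (aT := Shift n) _ (RGenInftyO.measurableE R)).
move=> _ [_ [a ->] <-].
(* [g] is continuous on [SigmaA A], so [{g < a}] is a union of cylinders. *)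
pose D j := [set x : Shift n | forall y, SigmaA A y -> agree x y j -> g y < a].
have -> : SigmaA A `&` g @^-1` `]-oo, a[ = SigmaA A `&` \bigcup_j D j.
  apply/seteqP; split => [x [SAx]|x [SAx [j _ Djx]]] /=; rewrite in_itv /=.
    rewrite -subr_gt0 => gxa; split => //.
    have [j Lj] := geometric_lt L th01 gxa.
    exists j => // y SAy xy; have := gL x y SAx SAy j xy.
    by rewrite ler_norml => /andP[? _]; lra.
  by split => //; apply: Djx.
apply: measurableI; first exact: SigmaA_measurable.
apply: bigcupT_measurable => j.
apply: (window_measurable (- j%:Z) (2 * j)%N) => x y xy Djx z SAz yz.
by apply: Djx => // i ij; rewrite -(yz i ij); exact: agree_window xy i ij.
Qed.

Lemma lipschitzA_bounded : exists B, forall x, SigmaA A x -> `|g x| <= B.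
Proof.
have [[x0 SAx0]|SA0] := pselect (SigmaA A !=set0); last first.
  by exists 0 => x SAx; case: SA0; exists x.
have [th [L [_ gL]]] := g_lip.
exists (`|g x0| + L) => x SAx.
have agree0 : agree x x0 0 by move=> i; rewrite ltn0.
have := gL x x0 SAx SAx0 0%N agree0; rewrite expr0 mulr1.
by have := ler_distD (g x0) (g x) 0; rewrite !subr0 distrC; lra.
Qed.

End lipschitzA.

Lemma lebesgue_measure_preimage_addr (R : realType) (c : R) (E : set R) :
  measurable E -> lebesgue_measure ((fun x => x + c) @^-1` E) = lebesgue_measure E.
Proof.
move=> mE; have mc : measurable_fun setT (fun x : measurableTypeR R => x + c).
  by apply: measurable_funD => //; exact: measurable_cst.
(* [mc], found by [//], makes the pushforward a measure. *)
apply/esym; apply: (@lebesgue_measure_unique _ (pushforward lebesgue_measure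
  (fun x : measurableTypeR R => x + c : measurableTypeR R))) => //.
move=> _ [[a b] _ <-] /=; rewrite /pushforward.
have -> : (fun x : R => x + c) @^-1` `]a, b]%classic = `]a - c, b - c]%classic.
  by apply/seteqP; split => x /=; rewrite !in_itv /= => /andP[? ?];
    apply/andP; split; lra.
rewrite !lebesgue_measure_itv /= !lte_fin ltrD2r; case: ifP => // _.
by rewrite -!EFinD opprB addrA subrK.
Qed.

Section measure_preserving.
Local Open Scope ereal_scope.
Context {d} {X : measurableType d} {R : realType} (m : {measure set X -> \bar R}).
Variable phi : X -> X.
Hypothesis mphi : measurable_fun setT phi.
Hypothesis phi_preserving : forall B, measurable B -> m (phi @^-1` B) = m B.

Lemma ge0_integral_preimage_preserving (D : set X) (g : X -> \bar R) :
  measurable D -> measurable_fun D g -> (forall x, D x -> 0 <= g x) ->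
  \int[m]_(x in phi @^-1` D) (g \o phi) x = \int[m]_(x in D) g x.
Proof.
move=> mD mg g0; rewrite -ge0_integral_pushforward //; last first.
  by move=> x /[!inE]; exact: g0.
by apply: eq_measure_integral => B mB _; exact: phi_preserving.
Qed.

Lemma integral_preimage_preserving (D : set X) (g : X -> \bar R) :
  measurable D -> measurable_fun D g ->
  \int[m]_(x in phi @^-1` D) (g \o phi) x = \int[m]_(x in D) g x.
Proof.
move=> mD mg; rewrite [LHS]integralE [RHS]integralE funepos_comp funeneg_comp.
rewrite !ge0_integral_preimage_preserving //.
- exact: measurable_funeneg.
- exact: measurable_funepos.
Qed.

Lemma ae_preimage_preserving (P : X -> Prop) :
  {ae m, forall x, P x} -> {ae m, forall x, P (phi x)}.
Proof.
move=> [N [mN N0 PN]]; exists (phi @^-1` N); split => //.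
- by rewrite -[X in measurable X]setTI; exact: mphi.
- by rewrite phi_preserving.
- by move=> x /= nPx; apply: PN.
Qed.

End measure_preserving.

Section skew_product.
Local Open Scope ereal_scope.
Context {d} {X : measurableType d} {R : realType} (mu : {measure set X -> \bar R}).
Variables (T : X -> X) (g : X -> R).
Hypothesis mT : measurable_fun setT T.
Hypothesis T_preserving : forall B, measurable B -> mu (T @^-1` B) = mu B.
Hypothesis mg : measurable_fun setT g.

Definition skew (z : X * measurableTypeR R) : X * measurableTypeR R :=
  (T z.1, (z.2 + g z.1)%R).

Lemma skew_measurable : measurable_fun setT skew.
Proof.
apply: measurable_fun_pair; first exact: measurableT_comp.
by apply: measurable_funD => //; exact: measurableT_comp.
Qed.

Lemma skew_preserving (E : set (X * measurableTypeR R)) : measurable E ->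
  (mu \x lebesgue_measure) (skew @^-1` E) = (mu \x lebesgue_measure) E.
Proof.
move=> mE; rewrite /product_measure1 /=.
transitivity (\int[mu]_x (lebesgue_measure \o xsection E) (T x)).
  apply: eq_integral => x _ /=.
  have -> : xsection (skew @^-1` E) x = (fun s => s + g x)%R @^-1` xsection E (T x).
    by apply/seteqP; split => s; rewrite /xsection.
  exact/lebesgue_measure_preimage_addr/measurable_xsection.
rewrite -[RHS](ge0_integral_preimage_preserving mu T mT T_preserving) //.
exact: measurable_fun_xsection.
Qed.

End skew_product.

Lemma abse_le_EFin {R : realType} (x : \bar R) (c : R) :
  (`|x| <= c%:E)%E -> x \is a fin_num /\ `|fine x| <= c.
Proof. by case: x => [r| |] //=; rewrite lee_fin. Qed.

Section bounded_integrand.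
Local Open Scope ereal_scope.
Context {d} {X : measurableType d} {R : realType} (m : {measure set X -> \bar R}).
Variables (D : set X) (h : X -> R) (M : R).
Hypotheses (mD : measurable D) (mh : measurable_fun D h).
Hypothesis h_bounded : {ae m, forall x, (`|h x| <= M)%R}.

Lemma abse_integral_bounded (S : set X) (c : R) : measurable S -> S `<=` D ->
  m S <= c%:E -> `|\int[m]_(x in S) (h x)%:E| <= (`|M| * c)%:E.
Proof.
move=> mS SD mSc.
have mhS : measurable_fun S (EFin \o h).
  by apply/measurable_EFinP; exact: measurable_funS mh.
apply: (le_trans (le_abse_integral _ mS mhS)).
apply: (@le_trans _ _ (\int[m]_(x in S) (cst `|M|%:E) x)).
  apply: ae_ge0_le_integral => //.
  - exact: measurableT_comp.
  - by move=> x _; rewrite lee_fin.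
  - move: h_bounded; apply: filterS => x hx _.
    by rewrite /= lee_fin (le_trans hx) ?ler_norm.
by rewrite integral_cst // EFinM lee_wpmul2l // lee_fin.
Qed.

Lemma integral_symdiff_le (S1 S2 : set X) (c1 c : R) :
  measurable S1 -> measurable S2 -> S1 `<=` D -> S2 `<=` D -> m S1 <= c1%:E ->
  m (S1 `\` S2) <= c%:E -> m (S2 `\` S1) <= c%:E ->
  (`|fine (\int[m]_(x in S1) (h x)%:E) - fine (\int[m]_(x in S2) (h x)%:E)|
    <= `|M| * (c + c))%R.
Proof.
move=> mS1 mS2 S1D S2D mS1c mS12 mS21.
have split_integral (S T : set X) : measurable S -> measurable T -> S `<=` D ->
    \int[m]_(x in S) (h x)%:E =
    \int[m]_(x in S `&` T) (h x)%:E + \int[m]_(x in S `\` T) (h x)%:E.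
  move=> mS mT SD; rewrite -{1}(setUIDK S T); apply: integral_setU.
  - exact: measurableI.
  - exact: measurableD.
  - by rewrite setUIDK; apply/measurable_EFinP; exact: measurable_funS mh.
  - by apply/disj_setPS => x [[_ ?] [_ ?]].
have mI : measurable (S1 `&` S2) := measurableI _ _ mS1 mS2.
have mIc : m (S1 `&` S2) <= c1%:E.
  by apply: le_trans mS1c; apply: le_measure; rewrite ?inE //; exact: subIsetl.
have /abse_le_EFin[fin12 _] :=
  abse_integral_bounded _ _ mI (fun x xS => S1D _ xS.1) mIc.
have /abse_le_EFin[fin1 bound1] :=
  abse_integral_bounded _ _ (measurableD mS1 mS2) (fun x xS => S1D _ xS.1) mS12.
have /abse_le_EFin[fin2 bound2] :=
  abse_integral_bounded _ _ (measurableD mS2 mS1) (fun x xS => S2D _ xS.1) mS21.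
rewrite (split_integral _ S2) // (split_integral S2 S1) // [S2 `&` S1]setIC.
rewrite (fineD fin12 fin1) (fineD fin12 fin2) opprD addrACA subrr add0r mulrDr.
by apply: (le_trans (ler_normB _ _)); apply: lerD.
Qed.

End bounded_integrand.

Section interval_boundary.
Context {R : realType}.
Implicit Types r B s t : R.

Definition itv_boundary r B : set R :=
  `[- r - B, - r + B]%classic `|` `[r - B, r + B]%classic.

Lemma itv_boundary_near {r B s t} : `|s - t| <= B ->
  `[- r, r]%classic s -> ~ `[- r, r]%classic t ->
  itv_boundary r B s /\ itv_boundary r B t.
Proof.
rewrite ler_norml /= !in_itv /= => /andP[st ts] /andP[rs sr] trt.
have [rt|tr] := lerP (- r) t.
- have rt' : r < t by rewrite ltNge; apply/negP => tr; apply: trt; rewrite rt tr.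
  by split; right; rewrite /= in_itv /=; apply/andP; split; lra.
- by split; left; rewrite /= in_itv /=; apply/andP; split; lra.
Qed.

Lemma lebesgue_measure_itv_boundary r B : 0 <= B ->
  (lebesgue_measure (itv_boundary r B) <= (4 * B)%:E)%E.
Proof.
move=> B0; apply: le_trans (measureU2 _ _ _) _ => //.
change (lebesgue_measure
    (`[(- r - B)%R, (- r + B)%R]%classic : set (measurableTypeR R)) +
  lebesgue_measure (`[(r - B)%R, (r + B)%R]%classic : set (measurableTypeR R))
  <= (4 * B)%:E)%E.
rewrite !lebesgue_measure_itv /= !lte_fin.
by do 2 case: ifP => _; rewrite -?EFinB -?EFinD ?adde0 ?add0e lee_fin; lra.
Qed.

End interval_boundary.

Section subshift_skew_map.
Local Open Scope ereal_scope.
Context {R : realType} {n : nat} {A : 'I_n.+1 -> 'I_n.+1 -> bool}.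
Context {mu : probability (Shift n) R} {f : Shift n -> R}.
Hypothesis mu_SigmaA : mu (SigmaA A) = 1.
Hypothesis shift_preserving :
  forall B, measurable B -> mu (@Defs.shift n @^-1` B) = mu B.
Hypothesis f_lip : lipschitzA A f.

Local Notation Sigma := (SigmaA A).
Local Notation RR := (measurableTypeR R).

(* [f] is only controlled on [Sigma]; setting it to [0] elsewhere does not
   change [skew_map f] on [Sigma `*` setT], which has full [nu mu]-measure. *)
Let fA : Shift n -> R := f \_ Sigma.
Let F := skew (@Defs.shift n) fA.

Let fA_measurable : measurable_fun setT fA.
Proof.
by apply/(measurable_restrictT _ (SigmaA_measurable A)); exact: lipschitzA_measurable.
Qed.

Let fA_bounded : exists2 B, (0 <= B)%R & forall x, (`|fA x| <= B)%R.
Proof.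
have [B fB] := lipschitzA_bounded f_lip; exists `|B|%R => // x.
rewrite /fA patchE; case: ifPn => [/set_mem/fB fxB|_]; last by rewrite normr0.
exact: le_trans fxB (ler_norm B).
Qed.

Let F_measurable : measurable_fun setT F.
Proof. exact: skew_measurable _ _ (@shift_measurable n) fA_measurable. Qed.

Let F_preserving E : measurable E -> nu mu (F @^-1` E) = nu mu E.
Proof. exact: (skew_preserving _ _ _ (@shift_measurable n) shift_preserving). Qed.

Let skew_mapE z : Sigma z.1 -> skew_map f z = F z.
Proof. by move=> Sz; rewrite /skew_map /F /skew /fA patchE mem_set. Qed.

Let SigmaT_measurable : measurable (Sigma `*` [set: RR]).
Proof. exact: measurableX (SigmaA_measurable A) measurableT. Qed.

Let preimage_F_SigmaT : F @^-1` (Sigma `*` [set: RR]) = Sigma `*` setT.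
Proof. by apply/seteqP; split => -[x s] [/= Sx _]; split => //; apply/SigmaA_shift. Qed.

Let ae_Sigma : {ae nu mu, forall z, Sigma z.1}.
Proof.
have muC : mu (~` Sigma) = 0.
  by rewrite probability_setC ?mu_SigmaA ?subee //; exact: SigmaA_measurable.
have mC := measurableC (SigmaA_measurable A).
exists (~` Sigma `*` [set: RR]); split => //; first exact: measurableX mC measurableT.
by rewrite /nu product_measure1E // (_ : _ (~` Sigma) = 0) ?mul0e.
Qed.

Let nu_SigmaX (S : set RR) : measurable S -> nu mu (Sigma `*` S) = lebesgue_measure S.
Proof.
move=> mS; rewrite /nu product_measure1E //; last exact: SigmaA_measurable.
by rewrite (_ : _ Sigma = 1) ?mul1e.
Qed.

Context {Phi : Shift n * RR -> R} {M : R}.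
Hypothesis Phi_measurable : measurable_fun (Sigma `*` setT) Phi.
Hypothesis Phi_bounded : {ae nu mu, forall z, (`|Phi z| <= M)%R}.

Let PhiF_measurable : measurable_fun (Sigma `*` setT) (Phi \o F).
Proof.
apply: measurable_comp SigmaT_measurable _ Phi_measurable _.
- by move=> _ [z Sz <-]; rewrite -preimage_F_SigmaT in Sz.
- exact: measurable_funTS F_measurable.
Qed.

Let PhiF_bounded : {ae nu mu, forall z, (`|Phi (F z)| <= M)%R}.
Proof. exact: ae_preimage_preserving _ _ F_measurable F_preserving _ Phi_bounded. Qed.

Lemma Linfty_skew_map : Linfty A mu (Phi \o skew_map f).
Proof.
split.
  apply: eq_measurable_fun PhiF_measurable => z /[!inE] -[Sz _].
  by rewrite /= skew_mapE.
exists M; apply: filterS2 ae_Sigma PhiF_bounded => z Sz PhiFz.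
by rewrite /= skew_mapE.
Qed.

Let H (r : R) := Sigma `*` `[(- r)%R, r]%classic.

Let H_measurable r : measurable (H r).
Proof. exact: measurableX (SigmaA_measurable A) (measurable_itv _). Qed.

Let preimage_H_measurable r : measurable (F @^-1` H r).
Proof.
rewrite -[X in measurable X]setTI; apply: F_measurable => //.
exact: H_measurable.
Qed.

Let symdiff_H r B : (forall x, `|fA x| <= B)%R ->
  H r `\` F @^-1` H r `<=` Sigma `*` itv_boundary r B /\
  F @^-1` H r `\` H r `<=` Sigma `*` itv_boundary r B.
Proof.
move=> fB; split => -[x s] [[/= Sx rs] nH]; split => //.
- have nrs : ~ `[(- r)%R, r]%classic (s + fA x)%R.
    by move=> rs'; apply: nH; split => //=; apply/SigmaA_shift.
  have st : (`|s - (s + fA x)| <= B)%R by rewrite opprD addrA subrr sub0r normrN.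
  exact: (itv_boundary_near st rs nrs).1.
- exact/SigmaA_shift.
- have nrs : ~ `[(- r)%R, r]%classic s.
    by move=> rs'; apply: nH; split => //; apply/SigmaA_shift.
  have st : (`|s + fA x - s| <= B)%R by rewrite addrAC subrr add0r.
  exact: (itv_boundary_near st rs nrs).2.
Qed.

Let window_integral_dist r B : (0 <= r)%R -> (0 <= B)%R -> (forall x, `|fA x| <= B)%R ->
  (`|fine (\int[nu mu]_(z in H r) (Phi (F z))%:E) -
     fine (\int[nu mu]_(z in F @^-1` H r) (Phi (F z))%:E)| <= `|M| * (4 * B + 4 * B))%R.
Proof.
move=> r0 B0 fB; have [HF FH] := symdiff_H r B fB.
have mI : measurable (itv_boundary r B) by exact: measurableU.
have nu_boundary S : measurable S -> S `<=` Sigma `*` itv_boundary r B ->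
    nu mu S <= (4 * B)%:E.
  move=> mS SB; apply: (@le_trans _ _ (nu mu (Sigma `*` itv_boundary r B))).
    apply: le_measure; rewrite ?inE //.
    exact: measurableX (SigmaA_measurable A) mI.
  by rewrite nu_SigmaX ?lebesgue_measure_itv_boundary.
have nuH : nu mu (H r) <= (r - - r)%:E.
  rewrite nu_SigmaX // lebesgue_measure_itv /= lte_fin.
  by case: ifPn => [_|]; rewrite ?lee_fin // -leNgt; lra.
apply: (integral_symdiff_le _ _ _ _ SigmaT_measurable PhiF_measurable PhiF_bounded
  _ _ (r - - r)%R) => //.
- exact: H_measurable.
- by move=> z [].
- by move=> z /= [/SigmaA_shift].
- exact: nu_boundary (measurableD (H_measurable r) (preimage_H_measurable r)) HF.
- exact: nu_boundary (measurableD (preimage_H_measurable r) (H_measurable r)) FH.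
Qed.

Let window_avg_skew_map r : window_avg A mu (Phi \o skew_map f) r =
  ((2 * r)^-1 * fine (\int[nu mu]_(z in H r) (Phi (F z))%:E))%R.
Proof.
rewrite /window_avg; congr (_ * fine _)%R.
by apply: eq_integral => z /[!inE] -[Sz _]; rewrite /= skew_mapE.
Qed.

Let window_avg_preimage r : window_avg A mu Phi r =
  ((2 * r)^-1 * fine (\int[nu mu]_(z in F @^-1` H r) (Phi (F z))%:E))%R.
Proof.
rewrite /window_avg (integral_preimage_preserving _ F F_measurable F_preserving
  _ (fun z => (Phi z)%:E)) //.
- exact: H_measurable.
- apply/measurable_EFinP; apply: measurable_funS SigmaT_measurable _ Phi_measurable.
  by move=> z [].
Qed.

Local Close Scope ereal_scope.

Lemma window_avg_skew_map_cvg (l : R) :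
  window_avg A mu Phi r @[r --> +oo] --> l ->
  window_avg A mu (Phi \o skew_map f) r @[r --> +oo] --> l.
Proof.
move=> Phi_l; have [B B0 fB] := fA_bounded.
rewrite (_ : window_avg _ _ _ = fun r => window_avg A mu Phi r +
    (window_avg A mu (Phi \o skew_map f) r - window_avg A mu Phi r))%R; last first.
  by apply/funext => r; rewrite addrC subrK.
rewrite -[l]addr0; apply: cvgD => //; apply/cvgr0Pnorm_lt => e e0.
near=> r.
have r0 : (0 < r)%R by near: r; apply: nbhs_pinfty_gt; rewrite num_real.
have rC : (`|M| * (8 * B) / e < r)%R.
  by near: r; apply: nbhs_pinfty_gt; rewrite num_real.
rewrite window_avg_skew_map window_avg_preimage -mulrBr normrM.
rewrite gtr0_norm ?invr_gt0 ?mulr_gt0 // mulrC ltr_pdivrMr ?mulr_gt0 //.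
have := window_integral_dist r B (ltW r0) B0 fB.
by rewrite ltr_pdivrMr // in rC; nra.
Unshelve. all: end_near.
Qed.

End subshift_skew_map.

Theorem lemma3p2 (R : realType) (n : nat) (A : 'I_n.+1 -> 'I_n.+1 -> bool)
    (mu : probability (Shift n) R) (f : Shift n -> R)
    (Phi : Shift n * R -> R) :
  topologically_mixing A ->
  Gibbs A mu ->
  lipschitzA A f ->
  (\int[mu]_(x in SigmaA A) (f x)%:E)%E = 0%E ->
  global_observable A mu Phi ->
  global_observable A mu (Phi \o skew_map f) /\
  nu_av A mu (Phi \o skew_map f) = nu_av A mu Phi.
Proof.
move=> _ [mu_SigmaA [shift_preserving _]] f_lip _.
move=> [[Phi_measurable [M Phi_bounded]] [l Phi_l]].
have skew_l := window_avg_skew_map_cvg mu_SigmaA shift_preserving f_lip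
  Phi_measurable Phi_bounded _ Phi_l.
split; first split.
- exact: (Linfty_skew_map mu_SigmaA shift_preserving f_lip Phi_measurable Phi_bounded).
- by exists l.
by rewrite /nu_av (cvg_lim _ skew_l) // (cvg_lim _ Phi_l).
Qed.
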